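(* Fix $\mu\in(0,1)$, $j\in\{2,3\}$, $T^*>0$ and relatively prime positive integers $a,b$ with $aT^*=b\pi$. Let $\mathbf{X}^*=(x^*,y^*,z^*,x^{*\prime},y^{*\prime},z^{*\prime})$ be a $T^*$-periodic function $\mathbb{R}\to\mathbb{R}^6$, with $\mathbf{r}^*=(x^*,y^*,z^* )$ of class $C^1$ avoiding $(-\mu,0,0)$ and $(1-\mu,0,0)$. Let $s\in\mathbb{R}$ satisfy the half-period symmetry conditions: for all $\tau\in[0,T^*/2]$, $$x^*(s+T^*-\tau)=x^*(s+\tau),\quad x^{*\prime}(s+T^*-\tau)=-x^{*\prime}(s+\tau),$$ $$y^*(s+T^*-\tau)=-y^*(s+\tau),\quad y^{*\prime}(s+T^*-\tau)=y^{*\prime}(s+\tau),$$ $$z^*(s+T^*-\tau)\,z^{*\prime}(s+T^*-\tau)=-z^*(s+\tau)\,z^{*\prime}(s+\tau).$$ Let $\mathcal{M}(s,\tau_0)=\int_0^{aT^*}\mathbf{h}_j(\mathbf{X}^*(s+\tau),\tau_0+\tau)\cdot\mathbf{r}^{*\prime}(s+\tau)\,d\tau$. Then for every $\tau_0\in\mathbb{R}$, $$\mathcal{M}(s,\tau_0)=2AB,\qquad A=\begin{cases}\sin(2\tau_0),& a=1,\\ 0,&a>1,\end{cases}$$ $$B=\int_0^{T^*/2}\Big(K_j\big(\mathbf{X}^*(s+\tau)\big)\cos(2\tau)-J_j\big(\mathbf{X}^*(s+\tau)\big)\sin(2\tau)\Big)\,d\tau.$$ In particular, if $a>1$ then $\mathcal{M}(s',\tau_0)=0$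 for all $s',\tau_0$, and if $a=1$ then $\mathcal{M}(s,\tau_0)=0$ whenever $\tau_0\in\frac{\pi}{2}\mathbb{Z}$.
   Context: For $\mathbf{r}=(x,y,z)$ write $\mathbf{R}_{1-\mu}=(x+\mu,y,z)$, $\mathbf{R}_\mu=(x-1+\mu,y,z)$, $R_{1-\mu}=|\mathbf{R}_{1-\mu}|$, $R_\mu=|\mathbf{R}_\mu|$, and $P(\mathbf{r})=\big(\frac{1-\mu}{R_{1-\mu}^3}-\frac{\mu}{R_\mu^3}\big)I_3-\frac{3}{R_{1-\mu}^5}\mathbf{R}_{1-\mu}\mathbf{R}_{1-\mu}^T+\frac{3}{R_\mu^5}\mathbf{R}_\mu\mathbf{R}_\mu^T$. For $\mathbf{X}=(\mathbf{r},\mathbf{r}')$, $\mathbf{r}'=(x',y',z')$: $\mathbf{h}_2(\mathbf{X},\alpha)=-\frac32\begin{bmatrix}-\cos2\alpha&\sin2\alpha&0\\ \sin2\alpha&\cos2\alpha&0\\0&0&2/3\end{bmatrix}\mathbf{r}-\frac18(1-\mu)\mu P(\mathbf{r})(-8\cos2\alpha,11\sin2\alpha,0)^T$, and $\mathbf{h}_3(\mathbf{X},\alpha)=-\frac1{12}(1-\mu)\mu P(\mathbf{r})(-38\cos2\alpha,59\sin2\alpha,0)^T$. With $\mathbf{e}_1=(1,0,0)^T$, $\mathbf{e}_2=(0,1,0)^T$, define $J_2(\mathbf{X})=\tfrac32(xx'-yy')+(1-\mu)\mu\,(P(\mathbf{r})\mathbf{e}_1)\cdot\mathbf{r}'$,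 $K_2(\mathbf{X})=-\tfrac32(yx'+xy')-\tfrac{11}{8}(1-\mu)\mu\,(P(\mathbf{r})\mathbf{e}_2)\cdot\mathbf{r}'$, $J_3(\mathbf{X})=\tfrac{38}{12}(1-\mu)\mu\,(P(\mathbf{r})\mathbf{e}_1)\cdot\mathbf{r}'$, $K_3(\mathbf{X})=-\tfrac{59}{12}(1-\mu)\mu\,(P(\mathbf{r})\mathbf{e}_2)\cdot\mathbf{r}'$, so that $\mathbf{h}_2(\mathbf{X},\alpha)\cdot\mathbf{r}'=J_2\cos2\alpha+K_2\sin2\alpha-zz'$ and $\mathbf{h}_3(\mathbf{X},\alpha)\cdot\mathbf{r}'=J_3\cos2\alpha+K_3\sin2\alpha$. These are the leading-order Melnikov perturbation terms of the Hill Restricted 4-Body Problem (forcing period $\pi$). *)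

From Stdlib Require Import Reals Lra.
From Coquelicot Require Import Coquelicot.
Open Scope R_scope.

Definition vec3 : Type := (R * R * R)%type.
Definition v3 (a b c : R) : vec3 := (a, b, c).
Definition vx (v : vec3) : R := fst (fst v).
Definition vy (v : vec3) : R := snd (fst v).
Definition vz (v : vec3) : R := snd v.
Definition dot3 (u v : vec3) : R := vx u * vx v + vy u * vy v + vz u * vz v.
Definition add3 (u v : vec3) : vec3 := v3 (vx u + vx v) (vy u + vy v) (vz u + vz v).
Definition scal3 (k : R) (v : vec3) : vec3 := v3 (k * vx v) (k * vy v) (k * vz v).
Definition norm3 (v : vec3) : R := sqrt (dot3 v v).

Definition Rbig1 (mu : R) (r : vec3) : vec3 := v3 (vx r + mu) (vy r) (vz r).
Definition Rbigmu (mu : R) (r : vec3) : vec3 := v3 (vx r - 1 + mu) (vy r) (vz r).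

Definition Pmat (mu : R) (r : vec3) (v : vec3) : vec3 :=
  let R1 := Rbig1 mu r in
  let Rm := Rbigmu mu r in
  let n1 := norm3 R1 in
  let nm := norm3 Rm in
  add3 (scal3 ((1 - mu) / n1 ^ 3 - mu / nm ^ 3) v)
    (add3 (scal3 (- (3 / n1 ^ 5) * dot3 R1 v) R1)
          (scal3 ((3 / nm ^ 5) * dot3 Rm v) Rm)).

Definition Mrot (al : R) (r : vec3) : vec3 :=
  v3 (- cos (2 * al) * vx r + sin (2 * al) * vy r)
     (sin (2 * al) * vx r + cos (2 * al) * vy r)
     (2 / 3 * vz r).

(* A state X = (r, r') *)
Definition state : Type := (vec3 * vec3)%type.

Definition h2 (mu : R) (X : state) (al : R) : vec3 :=
  add3 (scal3 (- (3 / 2)) (Mrot al (fst X)))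
       (scal3 (- (1 / 8) * (1 - mu) * mu)
              (Pmat mu (fst X) (v3 (-8 * cos (2 * al)) (11 * sin (2 * al)) 0))).

Definition h3 (mu : R) (X : state) (al : R) : vec3 :=
  scal3 (- (1 / 12) * (1 - mu) * mu)
        (Pmat mu (fst X) (v3 (-38 * cos (2 * al)) (59 * sin (2 * al)) 0)).

Definition e1 : vec3 := v3 1 0 0.
Definition e2 : vec3 := v3 0 1 0.

Definition J2 (mu : R) (X : state) : R :=
  let r := fst X in let r' := snd X in
  3 / 2 * (vx r * vx r' - vy r * vy r') + (1 - mu) * mu * dot3 (Pmat mu r e1) r'.
Definition K2 (mu : R) (X : state) : R :=
  let r := fst X in let r' := snd X in
  - (3 / 2) * (vy r * vx r' + vx r * vy r') - 11 / 8 * (1 - mu) * mu * dot3 (Pmat mu r e2) r'.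
Definition J3 (mu : R) (X : state) : R :=
  38 / 12 * (1 - mu) * mu * dot3 (Pmat mu (fst X) e1) (snd X).
Definition K3 (mu : R) (X : state) : R :=
  - (59 / 12) * (1 - mu) * mu * dot3 (Pmat mu (fst X) e2) (snd X).

(* index j in {2,3}: j = 2 selects h2/J2/K2, otherwise (j = 3) h3/J3/K3 *)
Definition hj (j : nat) (mu : R) (X : state) (al : R) : vec3 :=
  if Nat.eqb j 2 then h2 mu X al else h3 mu X al.
Definition Jj (j : nat) (mu : R) (X : state) : R :=
  if Nat.eqb j 2 then J2 mu X else J3 mu X.
Definition Kj (j : nat) (mu : R) (X : state) : R :=
  if Nat.eqb j 2 then K2 mu X else K3 mu X.

Definition Xstar (x y z xp yp zp : R -> R) (t : R) : state :=
  (v3 (x t) (y t) (z t), v3 (xp t) (yp t) (zp t)).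

Definition Melnikov (j : nat) (mu : R) (x y z xp yp zp : R -> R) (a : nat) (T : R)
    (s tau0 : R) : R :=
  RInt (fun tau => dot3 (hj j mu (Xstar x y z xp yp zp (s + tau)) (tau0 + tau))
                        (v3 (xp (s + tau)) (yp (s + tau)) (zp (s + tau))))
       0 (INR a * T).

(** Expanding [cos 2(tau0 + tau)] and [sin 2(tau0 + tau)] writes the Melnikov integrand as
    [cos 2tau0 P + sin 2tau0 Q - z z'], where [P = J cos 2tau + K sin 2tau] and
    [Q = K cos 2tau - J sin 2tau]; the term [z z'] (present only for [h_2]) integrates to zero
    because [z^2] is periodic.  Translating the orbit by [T] rotates the vector of integrals
    [(int P, int Q)] over the common period [a T] by the angle [2T]; for [a > 1] coprimality forces
    [T] not to be a multiple of [pi], so this vector must vanish.  For [a = 1] the half-period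
    symmetry makes [J] odd and [K] even about [T/2] (for [z^2] this follows from [(z^2)'] being
    odd), so [int P = 0] and [int Q] is twice the half-period integral [B]. *)

From Stdlib Require Import Reals Lra Lia.
From Coquelicot Require Import Coquelicot.
Open Scope R_scope.

Lemma continuous_Rplus (f g : R -> R) t :
  continuous f t -> continuous g t -> continuous (fun u => f u + g u) t.
Proof. intros; now apply (continuous_plus f g). Qed.

Lemma continuous_Rmult (f g : R -> R) t :
  continuous f t -> continuous g t -> continuous (fun u => f u * g u) t.
Proof. intros; now apply (continuous_mult f g). Qed.

Lemma continuous_Ropp (f : R -> R) t : continuous f t -> continuous (fun u => - f u) t.
Proof. intros; now apply (continuous_opp f). Qed.

Lemma continuous_Rminus (f g : R -> R) t :
  continuous f t -> continuous g t -> continuous (fun u => f u - g u) t.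
Proof. intros; apply continuous_Rplus; [|apply continuous_Ropp]; assumption. Qed.

Lemma continuous_Rdiv (f g : R -> R) t :
  continuous f t -> continuous g t -> g t <> 0 -> continuous (fun u => f u / g u) t.
Proof. intros; apply continuous_Rmult; [|apply continuous_Rinv_comp]; assumption. Qed.

Lemma continuous_Rsqrt (f : R -> R) t : continuous f t -> continuous (fun u => sqrt (f u)) t.
Proof. intros; now apply continuous_sqrt_comp. Qed.

Lemma continuous_Rpow (f : R -> R) n t : continuous f t -> continuous (fun u => f u ^ n) t.
Proof.
  intros H; induction n; simpl.
  - apply continuous_const.
  - now apply continuous_Rmult.
Qed.

Lemma continuous_cos_2 t : continuous (fun u => cos (2 * u)) t.
Proof. apply (ex_derive_continuous (V := R_NormedModule)); auto_derive; auto. Qed.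

Lemma continuous_sin_2 t : continuous (fun u => sin (2 * u)) t.
Proof. apply (ex_derive_continuous (V := R_NormedModule)); auto_derive; auto. Qed.

(* Leaves the side conditions [g t <> 0] of divisions as goals. *)
Ltac solve_continuous := repeat match goal with
  | |- continuous (fun _ => ?c) _ => apply (continuous_const c)
  | |- continuous (fun u => u) _ => apply continuous_id
  | |- continuous (fun u => @?f u + @?g u) _ => apply (continuous_Rplus f g)
  | |- continuous (fun u => @?f u - @?g u) _ => apply (continuous_Rminus f g)
  | |- continuous (fun u => @?f u * @?g u) _ => apply (continuous_Rmult f g)
  | |- continuous (fun u => @?f u / @?g u) _ => apply (continuous_Rdiv f g)
  | |- continuous (fun u => - @?f u) _ => apply (continuous_Ropp f)
  | |- continuous (fun u => sqrt (@?f u)) _ => apply (continuous_Rsqrt f)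
  | |- continuous (fun u => (@?f u) ^ ?n) _ => apply (continuous_Rpow f n)
  | |- continuous (fun u => cos (2 * u)) _ => apply continuous_cos_2
  | |- continuous (fun u => sin (2 * u)) _ => apply continuous_sin_2
  | H : forall t, continuous ?f t |- continuous (fun u => ?f u) _ => apply H
  end.

(* Coquelicot states equalities at the carrier of a structure; [ring] needs them at [R]. *)
Ltac as_R_eq := match goal with |- ?a = ?b => change (@eq R a b) end.

Lemma continuous_shift (f : R -> R) c t :
  (forall u, continuous f u) -> continuous (fun u => f (c + u)) t.
Proof.
  intros H; apply (continuous_comp (fun u => c + u) f); [solve_continuous | apply H].
Qed.

Lemma continuous_of_is_derive (f df : R -> R) :
  (forall t, is_derive f t (df t)) -> forall t, continuous f t.
Proof.
  intros H t; apply (ex_derive_continuous (V := R_NormedModule)); exists (df t); apply H.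
Qed.

Lemma is_derive_eq (f : R -> R) t l l' : is_derive f t l -> l = l' -> is_derive f t l'.
Proof. now intros H <-. Qed.

Lemma is_derive_sq (f : R -> R) t df :
  is_derive f t df -> is_derive (fun u => f u * f u) t (2 * f t * df).
Proof.
  intros H; eapply is_derive_eq; [apply (is_derive_mult f f t df df H H); intros; apply Rmult_comm |].
  simpl; unfold plus, mult; simpl; ring.
Qed.

Lemma is_derive_lin_comp (f df : R -> R) u v t : (forall t, is_derive f t (df t)) ->
  is_derive (fun w => f (u * w + v)) t (u * df (u * t + v)).
Proof.
  intros H; eapply is_derive_eq.
  - apply (is_derive_comp f (fun w => u * w + v) t (df (u * t + v)) u); [apply H |].
    auto_derive; auto; ring.
  - simpl; unfold scal; simpl; unfold mult; simpl; ring.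
Qed.

Lemma eq_of_is_derive_0 (F : R -> R) a b :
  (forall t, Rmin a b <= t <= Rmax a b -> is_derive F t 0) -> F b = F a.
Proof.
  intros H.
  assert (E := is_RInt_unique _ _ _ _
    (is_RInt_derive (V := R_CompleteNormedModule) F (fun _ => 0) a b H
       (fun t _ => continuous_const 0 t))).
  rewrite (RInt_const (V := R_CompleteNormedModule)) in E.
  unfold minus, plus, opp, scal in E; simpl in E; unfold mult in E; simpl in E. lra.
Qed.

Lemma periodic_mult (F : R -> R) T :
  (forall t, F (t + T) = F t) -> forall n t, F (t + INR n * T) = F t.
Proof.
  intros H n; induction n as [|n IH]; intros t.
  - simpl; rewrite Rmult_0_l, Rplus_0_r; reflexivity.
  - rewrite S_INR. replace (t + (INR n + 1) * T) with ((t + INR n * T) + T) by ring.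
    rewrite H; apply IH.
Qed.

Lemma ex_RInt_continuous_R (F : R -> R) a b : (forall t, continuous F t) -> ex_RInt F a b.
Proof. intros H; apply (ex_RInt_continuous (V := R_CompleteNormedModule)); intros; apply H. Qed.

Lemma RInt_lincomb (P Q : R -> R) c1 c2 a b : ex_RInt P a b -> ex_RInt Q a b ->
  RInt (fun t => c1 * P t + c2 * Q t) a b = c1 * RInt P a b + c2 * RInt Q a b.
Proof.
  intros HP HQ; apply (is_RInt_unique (V := R_CompleteNormedModule)).
  apply (is_RInt_plus (V := R_NormedModule) (fun t => c1 * P t) (fun t => c2 * Q t));
    apply (is_RInt_scal (V := R_NormedModule)); now apply (RInt_correct (V := R_CompleteNormedModule)).
Qed.

Lemma RInt_translate (F : R -> R) c L : (forall t, continuous F t) ->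
  RInt F c (c + L) = RInt (fun u => F (u + c)) 0 L.
Proof.
  intros H.
  assert (E := RInt_comp_lin F 1 c 0 L (ex_RInt_continuous_R _ _ _ H)).
  replace (1 * 0 + c) with c in E by ring; replace (1 * L + c) with (c + L) in E by ring.
  rewrite <- E; apply RInt_ext; intros u _.
  unfold scal; simpl; unfold mult; simpl. rewrite Rmult_1_l, Rmult_1_l; reflexivity.
Qed.

Lemma RInt_periodic_translate (F : R -> R) L c : (forall t, continuous F t) ->
  (forall t, F (t + L) = F t) -> RInt F c (c + L) = RInt F 0 L.
Proof.
  intros H HP.
  assert (ex : forall a b, ex_RInt F a b) by (intros; now apply ex_RInt_continuous_R).
  rewrite <- (RInt_Chasles F c L (c + L)), <- (RInt_Chasles F 0 c L) by auto.
  replace (c + L) with (L + c) by ring.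
  rewrite (RInt_translate F L c H).
  assert (RInt (fun u => F (u + L)) 0 c = RInt F 0 c) by (apply RInt_ext; intros; apply HP).
  unfold plus; simpl; lra.
Qed.

Lemma RInt_reflect_half (F : R -> R) T sg : 0 < T -> (forall t, continuous F t) ->
  (forall v, 0 <= v <= T / 2 -> F (T - v) = sg * F v) ->
  RInt F 0 T = (1 + sg) * RInt F 0 (T / 2).
Proof.
  intros HT H HS.
  assert (ex : forall a b, ex_RInt F a b) by (intros; now apply ex_RInt_continuous_R).
  assert (E := RInt_comp_lin F (-1) T (T / 2) 0 (ex _ _)).
  replace (-1 * (T / 2) + T) with (T / 2) in E by field; replace (-1 * 0 + T) with T in E by ring.
  assert (Eright : RInt F (T / 2) T = - sg * RInt F (T / 2) 0).
  { rewrite <- E, <- (RInt_scal (V := R_CompleteNormedModule)) by auto.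
    apply RInt_ext; intros v Hv.
    rewrite Rmin_right, Rmax_left in Hv by lra.
    unfold scal; simpl; unfold mult; simpl.
    replace (-1 * v + T) with (T - v) by ring. rewrite HS by lra. ring. }
  rewrite <- (RInt_Chasles F 0 (T / 2) T), Eright, <- (opp_RInt_swap F 0 (T / 2)) by auto.
  unfold plus, opp; simpl; as_R_eq; ring.
Qed.

Lemma RInt_mul_derive (f df : R -> R) a b :
  (forall t, is_derive f t (df t)) -> (forall t, continuous df t) ->
  RInt (fun t => f t * df t) a b = (f b * f b - f a * f a) / 2.
Proof.
  intros Hd Hc.
  assert (Cf := continuous_of_is_derive f df Hd).
  assert (Hsq : forall t, is_derive (fun t => f t * f t) t (2 * (f t * df t))).
  { intros t; eapply is_derive_eq; [apply is_derive_sq, Hd | as_R_eq; ring]. }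
  assert (E := is_RInt_unique _ _ _ _
    (is_RInt_derive (V := R_CompleteNormedModule) _ _ a b (fun t _ => Hsq t)
       (fun t _ => ltac:(solve_continuous)))).
  rewrite (RInt_scal (V := R_CompleteNormedModule) (fun t => f t * df t))
    in E by (apply ex_RInt_continuous_R; intros; solve_continuous).
  unfold scal, minus, plus, opp in E; simpl in E; unfold mult in E; simpl in E. lra.
Qed.

Lemma sq_reflect (f df : R -> R) s T : (forall t, is_derive f t (df t)) ->
  (forall v, 0 <= v <= T / 2 -> f (s + T - v) * df (s + T - v) = - (f (s + v) * df (s + v))) ->
  forall v, 0 <= v <= T / 2 -> f (s + T - v) * f (s + T - v) = f (s + v) * f (s + v).
Proof.
  intros Hd Hs v Hv.
  set (u := fun t => f (-1 * t + (s + T)) * f (-1 * t + (s + T)) - f (1 * t + s) * f (1 * t + s)).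
  assert (E : u (T / 2) = u v).
  { apply eq_of_is_derive_0; intros t Ht.
    rewrite Rmin_left, Rmax_right in Ht by lra.
    eapply is_derive_eq.
    - apply (is_derive_minus (fun t => f (-1 * t + (s + T)) * f (-1 * t + (s + T)))
                             (fun t => f (1 * t + s) * f (1 * t + s)));
        apply is_derive_sq, is_derive_lin_comp, Hd.
    - unfold minus, plus, opp; simpl.
      replace (-1 * t + (s + T)) with (s + T - t) by ring.
      replace (1 * t + s) with (s + t) by ring.
      assert (Hst := Hs t ltac:(lra)). as_R_eq; nra. }
  unfold u in E.
  replace (-1 * (T / 2) + (s + T)) with (1 * (T / 2) + s) in E by field.
  replace (-1 * v + (s + T)) with (s + T - v) in E by ring.
  replace (1 * v + s) with (s + v) in E by ring.
  lra.
Qed.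

Lemma RInt_Rminus (f g : R -> R) a b : ex_RInt f a b -> ex_RInt g a b ->
  RInt (fun t => f t - g t) a b = RInt f a b - RInt g a b.
Proof. intros; now apply (RInt_minus (V := R_CompleteNormedModule)). Qed.

Lemma RInt_mul_derive_translate (f df : R -> R) s L :
  (forall t, is_derive f t (df t)) -> (forall t, continuous df t) -> f (s + L) = f s ->
  RInt (fun t => f (s + t) * df (s + t)) 0 L = 0.
Proof.
  intros Hd Hc Hper.
  assert (Cf := continuous_of_is_derive f df Hd).
  transitivity (RInt (fun u => f u * df u) s (s + L)).
  - rewrite RInt_translate by (intros; solve_continuous).
    apply RInt_ext; intros; now rewrite Rplus_comm.
  - rewrite (RInt_mul_derive f df), Hper by assumption; as_R_eq; field.
Qed.

Definition coef_cos (J K : R -> R) (t : R) : R := J t * cos (2 * t) + K t * sin (2 * t).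
Definition coef_sin (J K : R -> R) (t : R) : R := K t * cos (2 * t) - J t * sin (2 * t).

Lemma coef_cos_continuous (J K : R -> R) t :
  (forall t, continuous J t) -> (forall t, continuous K t) -> continuous (coef_cos J K) t.
Proof. intros; unfold coef_cos; solve_continuous. Qed.

Lemma coef_sin_continuous (J K : R -> R) t :
  (forall t, continuous J t) -> (forall t, continuous K t) -> continuous (coef_sin J K) t.
Proof. intros; unfold coef_sin; solve_continuous. Qed.

Lemma coef_cos_translate (J K : R -> R) T t : J (t + T) = J t -> K (t + T) = K t ->
  coef_cos J K (t + T) = cos (2 * T) * coef_cos J K t + sin (2 * T) * coef_sin J K t.
Proof.
  intros HJ HK; unfold coef_cos, coef_sin; rewrite HJ, HK.
  replace (2 * (t + T)) with (2 * t + 2 * T) by ring.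
  rewrite cos_plus, sin_plus; ring.
Qed.

Lemma coef_sin_translate (J K : R -> R) T t : J (t + T) = J t -> K (t + T) = K t ->
  coef_sin J K (t + T) = cos (2 * T) * coef_sin J K t - sin (2 * T) * coef_cos J K t.
Proof.
  intros HJ HK; unfold coef_cos, coef_sin; rewrite HJ, HK.
  replace (2 * (t + T)) with (2 * t + 2 * T) by ring.
  rewrite cos_plus, sin_plus; ring.
Qed.

Lemma rotation_fixed_point (c s p q : R) : c * c + s * s = 1 -> c <> 1 ->
  p = c * p + s * q -> q = c * q - s * p -> p = 0 /\ q = 0.
Proof.
  intros Hcs Hc Hp Hq.
  assert (E : (2 - 2 * c) * p = 0 /\ (2 - 2 * c) * q = 0) by (split; nra).
  split; apply (Rmult_eq_reg_l (2 - 2 * c)); lra.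
Qed.

Lemma RInt_coef_vanish (J K : R -> R) T n :
  (forall t, continuous J t) -> (forall t, continuous K t) ->
  (forall t, J (t + T) = J t) -> (forall t, K (t + T) = K t) ->
  cos (2 * (INR n * T)) = 1 -> sin (2 * (INR n * T)) = 0 -> sin T <> 0 ->
  RInt (coef_cos J K) 0 (INR n * T) = 0 /\ RInt (coef_sin J K) 0 (INR n * T) = 0.
Proof.
  intros CJ CK PJ PK cL sL sT.
  set (L := INR n * T) in *.
  assert (Pcos : forall t, coef_cos J K (t + L) = coef_cos J K t).
  { intros t; rewrite coef_cos_translate, cL, sL by now apply periodic_mult. ring. }
  assert (Psin : forall t, coef_sin J K (t + L) = coef_sin J K t).
  { intros t; rewrite coef_sin_translate, cL, sL by now apply periodic_mult. ring. }
  assert (Ccos := fun t => coef_cos_continuous J K t CJ CK).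
  assert (Csin := fun t => coef_sin_continuous J K t CJ CK).
  assert (ex : forall F a b, (forall t, continuous F t) -> ex_RInt F a b)
    by (intros; now apply ex_RInt_continuous_R).
  (* translating by T rotates the pair of integrals over a common period by the angle 2T *)
  apply (rotation_fixed_point (cos (2 * T)) (sin (2 * T))).
  - rewrite Rplus_comm; apply sin2_cos2.
  - rewrite cos_2a_sin; intros E; apply sT; nra.
  - transitivity (RInt (fun u => coef_cos J K (u + T)) 0 L).
    + now rewrite <- (RInt_translate _ T L), RInt_periodic_translate.
    + rewrite <- RInt_lincomb by auto.
      apply RInt_ext; intros; now apply coef_cos_translate.
  - transitivity (RInt (fun u => coef_sin J K (u + T)) 0 L).
    + now rewrite <- (RInt_translate _ T L), RInt_periodic_translate.
    + unfold Rminus; rewrite Ropp_mult_distr_l, <- RInt_lincomb by auto.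
      apply RInt_ext; intros; rewrite coef_sin_translate by auto; as_R_eq; ring.
Qed.

Lemma RInt_coef_reflect (J K : R -> R) T : 0 < T ->
  (forall t, continuous J t) -> (forall t, continuous K t) ->
  cos (2 * T) = 1 -> sin (2 * T) = 0 ->
  (forall v, 0 <= v <= T / 2 -> J (T - v) = - J v /\ K (T - v) = K v) ->
  RInt (coef_cos J K) 0 T = 0 /\ RInt (coef_sin J K) 0 T = 2 * RInt (coef_sin J K) 0 (T / 2).
Proof.
  intros HT CJ CK cT sT Hsym.
  assert (Trig : forall v, cos (2 * (T - v)) = cos (2 * v) /\ sin (2 * (T - v)) = - sin (2 * v)).
  { intros v; replace (2 * (T - v)) with (2 * T - 2 * v) by ring.
    rewrite cos_minus, sin_minus, cT, sT; split; ring. }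
  split.
  - rewrite (RInt_reflect_half _ T (-1)); [as_R_eq; ring | assumption | intros; now apply coef_cos_continuous |].
    intros v Hv; destruct (Hsym v Hv) as [EJ EK], (Trig v) as [Ec Es].
    unfold coef_cos; rewrite EJ, EK, Ec, Es; ring.
  - rewrite (RInt_reflect_half _ T 1); [as_R_eq; ring | assumption | intros; now apply coef_sin_continuous |].
    intros v Hv; destruct (Hsym v Hv) as [EJ EK], (Trig v) as [Ec Es].
    unfold coef_sin; rewrite EJ, EK, Ec, Es; ring.
Qed.

Lemma cos_sin_2_INR_PI (b : nat) : cos (2 * (INR b * PI)) = 1 /\ sin (2 * (INR b * PI)) = 0.
Proof.
  replace (2 * (INR b * PI)) with (0 + 2 * INR b * PI) by ring.
  rewrite cos_period, sin_period, cos_0, sin_0; split; reflexivity.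
Qed.

(* If [T = k pi] then [b = a k], so [a] divides [gcd a b = 1]. *)
Lemma sin_neq_0_coprime (a b : nat) T :
  (1 < a)%nat -> Nat.gcd a b = 1%nat -> INR a * T = INR b * PI -> sin T <> 0.
Proof.
  intros Ha Hab HaT HsT.
  destruct (sin_eq_0_0 T HsT) as [k Hk].
  assert (Hk' : (Z.of_nat a * k = Z.of_nat b)%Z).
  { apply eq_IZR; rewrite mult_IZR, <- !INR_IZR_INZ.
    apply (Rmult_eq_reg_r PI); [| apply PI_neq0].
    rewrite <- HaT, Hk; ring. }
  assert (Eb : b = (a * Z.to_nat k)%nat) by lia.
  rewrite Eb, Nat.gcd_mul_diag_l in Hab; lia.
Qed.

Lemma sum_sq_pos a b c : ~ (a = 0 /\ b = 0 /\ c = 0) -> 0 < a * a + b * b + c * c.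
Proof. intros H; apply Rnot_le_lt; intros Hle; apply H; repeat split; nra. Qed.

Lemma norm3_Rbig1_neq_0 mu x y z : ~ (x = - mu /\ y = 0 /\ z = 0) ->
  norm3 (Rbig1 mu (v3 x y z)) <> 0.
Proof.
  intros H; apply Rgt_not_eq, sqrt_lt_R0, sum_sq_pos.
  intros (E1 & E2 & E3); apply H; unfold Rbig1, vx, vy, vz, v3 in *; simpl in *; repeat split; lra.
Qed.

Lemma norm3_Rbigmu_neq_0 mu x y z : ~ (x = 1 - mu /\ y = 0 /\ z = 0) ->
  norm3 (Rbigmu mu (v3 x y z)) <> 0.
Proof.
  intros H; apply Rgt_not_eq, sqrt_lt_R0, sum_sq_pos.
  intros (E1 & E2 & E3); apply H; unfold Rbigmu, vx, vy, vz, v3 in *; simpl in *; repeat split; lra.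
Qed.

Lemma hj_dot_decomp j mu (X : state) al :
  norm3 (Rbig1 mu (fst X)) <> 0 -> norm3 (Rbigmu mu (fst X)) <> 0 ->
  dot3 (hj j mu X al) (snd X) =
  Jj j mu X * cos (2 * al) + Kj j mu X * sin (2 * al)
  - (if Nat.eqb j 2 then vz (fst X) * vz (snd X) else 0).
Proof.
  destruct X as [[[r1 r2] r3] [[p1 p2] p3]].
  unfold hj, Jj, Kj; destruct (Nat.eqb j 2);
  unfold h2, h3, Mrot, J2, K2, J3, K3, Pmat, dot3, add3, scal3, e1, e2, vx, vy, vz, v3;
  cbn [fst snd]; intros N1 N2; field; repeat split; try apply pow_nonzero; assumption.
Qed.

Definition along (F : state -> R) (X : R -> state) (s t : R) : R := F (X (s + t)).

Lemma along_periodic F (X : R -> state) T s t :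
  (forall t, X (t + T) = X t) -> along F X s (t + T) = along F X s t.
Proof. intros HX; unfold along; now rewrite <- Rplus_assoc, HX. Qed.

Lemma along_Jj_Kj_continuous j mu (x y z xp yp zp : R -> R) s t :
  (forall t, is_derive x t (xp t)) -> (forall t, is_derive y t (yp t)) ->
  (forall t, is_derive z t (zp t)) ->
  (forall t, continuous xp t) -> (forall t, continuous yp t) -> (forall t, continuous zp t) ->
  (forall t, ~ (x t = - mu /\ y t = 0 /\ z t = 0)) ->
  (forall t, ~ (x t = 1 - mu /\ y t = 0 /\ z t = 0)) ->
  continuous (along (Jj j mu) (Xstar x y z xp yp zp) s) t /\
  continuous (along (Kj j mu) (Xstar x y z xp yp zp) s) t.
Proof.
  intros Hdx Hdy Hdz Hcx Hcy Hcz Hav1 Hav2.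
  assert (Cx := continuous_of_is_derive x xp Hdx).
  assert (Cy := continuous_of_is_derive y yp Hdy).
  assert (Cz := continuous_of_is_derive z zp Hdz).
  set (FJ := fun u => Jj j mu (Xstar x y z xp yp zp u)).
  set (FK := fun u => Kj j mu (Xstar x y z xp yp zp u)).
  assert (C : forall u, continuous FJ u /\ continuous FK u).
  { intros u.
    assert (N1 := norm3_Rbig1_neq_0 mu _ _ _ (Hav1 u)).
    assert (N2 := norm3_Rbigmu_neq_0 mu _ _ _ (Hav2 u)).
    unfold norm3, dot3, Rbig1, Rbigmu, vx, vy, vz, v3 in N1, N2; cbn [fst snd] in N1, N2.
    unfold FJ, FK, Jj, Kj; destruct (Nat.eqb j 2);
    unfold J2, K2, J3, K3, Pmat, norm3, dot3, add3, scal3, Rbig1, Rbigmu, e1, e2, Xstar, vx, vy, vz, v3;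
    cbn [fst snd]; split; solve_continuous; apply pow_nonzero; assumption. }
  split; [apply (continuous_shift FJ) | apply (continuous_shift FK)]; intros; apply C.
Qed.

(* [P(r) (v1, v2, 0) . r'] depends on [z] and [z'] only through [zz = z^2] and [zzp = z z']. *)
Definition planar_Pdot mu x y zz (v1 v2 : R) xp yp zzp :=
  let n1 := sqrt ((x + mu) * (x + mu) + y * y + zz) in
  let nm := sqrt ((x - 1 + mu) * (x - 1 + mu) + y * y + zz) in
  ((1 - mu) / n1 ^ 3 - mu / nm ^ 3) * (v1 * xp + v2 * yp)
  - 3 / n1 ^ 5 * ((x + mu) * v1 + y * v2) * ((x + mu) * xp + y * yp + zzp)
  + 3 / nm ^ 5 * ((x - 1 + mu) * v1 + y * v2) * ((x - 1 + mu) * xp + y * yp + zzp).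

Lemma dot3_Pmat_planar mu x y z v1 v2 xp yp zp :
  dot3 (Pmat mu (v3 x y z) (v3 v1 v2 0)) (v3 xp yp zp) =
  planar_Pdot mu x y (z * z) v1 v2 xp yp (z * zp).
Proof.
  unfold Pmat, planar_Pdot, norm3, dot3, add3, scal3, Rbig1, Rbigmu, vx, vy, vz, v3; cbn [fst snd].
  unfold Rdiv; ring.
Qed.

Lemma planar_Pdot_reflect_e1 mu x y zz xp yp zzp :
  planar_Pdot mu x (- y) zz 1 0 (- xp) yp (- zzp) = - planar_Pdot mu x y zz 1 0 xp yp zzp.
Proof. unfold planar_Pdot; cbv zeta; replace (- y * - y) with (y * y) by ring; unfold Rdiv; ring. Qed.

Lemma planar_Pdot_reflect_e2 mu x y zz xp yp zzp :
  planar_Pdot mu x (- y) zz 0 1 (- xp) yp (- zzp) = planar_Pdot mu x y zz 0 1 xp yp zzp.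
Proof. unfold planar_Pdot; cbv zeta; replace (- y * - y) with (y * y) by ring; unfold Rdiv; ring. Qed.

Lemma Jj_Kj_reflect j mu x1 y1 z1 xp1 yp1 zp1 x2 y2 z2 xp2 yp2 zp2 :
  x2 = x1 -> xp2 = - xp1 -> y2 = - y1 -> yp2 = yp1 ->
  z2 * z2 = z1 * z1 -> z2 * zp2 = - (z1 * zp1) ->
  Jj j mu (v3 x2 y2 z2, v3 xp2 yp2 zp2) = - Jj j mu (v3 x1 y1 z1, v3 xp1 yp1 zp1) /\
  Kj j mu (v3 x2 y2 z2, v3 xp2 yp2 zp2) = Kj j mu (v3 x1 y1 z1, v3 xp1 yp1 zp1).
Proof.
  intros -> -> -> -> Hz Hzp.
  unfold Jj, Kj; destruct (Nat.eqb j 2); unfold J2, K2, J3, K3, e1, e2; cbn [fst snd];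
    rewrite !dot3_Pmat_planar, Hz, Hzp, planar_Pdot_reflect_e1, planar_Pdot_reflect_e2;
    unfold vx, vy, vz, v3; cbn [fst snd]; split; ring.
Qed.

Lemma along_Jj_Kj_reflect j mu (x y z xp yp zp : R -> R) s T :
  (forall t, is_derive z t (zp t)) ->
  (forall tau, 0 <= tau <= T / 2 ->
     x (s + T - tau) = x (s + tau) /\ xp (s + T - tau) = - xp (s + tau) /\
     y (s + T - tau) = - y (s + tau) /\ yp (s + T - tau) = yp (s + tau) /\
     z (s + T - tau) * zp (s + T - tau) = - (z (s + tau) * zp (s + tau))) ->
  forall v, 0 <= v <= T / 2 ->
  along (Jj j mu) (Xstar x y z xp yp zp) s (T - v) = - along (Jj j mu) (Xstar x y z xp yp zp) s v /\
  along (Kj j mu) (Xstar x y z xp yp zp) s (T - v) = along (Kj j mu) (Xstar x y z xp yp zp) s v.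
Proof.
  intros Hdz Hsym v Hv.
  unfold along, Xstar; replace (s + (T - v)) with (s + T - v) by ring.
  destruct (Hsym v Hv) as (Ex & Exp & Ey & Eyp & Ezzp).
  apply Jj_Kj_reflect; try assumption.
  apply (sq_reflect z zp s T Hdz); [| exact Hv].
  intros tau Htau; apply (Hsym tau Htau).
Qed.

Lemma Melnikov_decomp j mu (x y z xp yp zp : R -> R) a T s tau0 :
  (forall t, is_derive x t (xp t)) -> (forall t, is_derive y t (yp t)) ->
  (forall t, is_derive z t (zp t)) ->
  (forall t, continuous xp t) -> (forall t, continuous yp t) -> (forall t, continuous zp t) ->
  (forall t, ~ (x t = - mu /\ y t = 0 /\ z t = 0)) ->
  (forall t, ~ (x t = 1 - mu /\ y t = 0 /\ z t = 0)) ->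
  z (s + INR a * T) = z s ->
  let J := along (Jj j mu) (Xstar x y z xp yp zp) s in
  let K := along (Kj j mu) (Xstar x y z xp yp zp) s in
  Melnikov j mu x y z xp yp zp a T s tau0 =
  cos (2 * tau0) * RInt (coef_cos J K) 0 (INR a * T)
  + sin (2 * tau0) * RInt (coef_sin J K) 0 (INR a * T).
Proof.
  intros Hdx Hdy Hdz Hcx Hcy Hcz Hav1 Hav2 Hper J K.
  assert (CJK := fun t => along_Jj_Kj_continuous j mu x y z xp yp zp s t
                   Hdx Hdy Hdz Hcx Hcy Hcz Hav1 Hav2).
  assert (CJ : forall t, continuous J t) by apply CJK.
  assert (CK : forall t, continuous K t) by apply CJK.
  set (Z := fun t => if Nat.eqb j 2 then z (s + t) * zp (s + t) else 0).
  assert (CZ : forall t, continuous Z t).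
  { intros t; unfold Z; destruct (Nat.eqb j 2); [| solve_continuous].
    assert (Cz := continuous_of_is_derive z zp Hdz).
    apply (continuous_Rmult (fun t => z (s + t))); apply continuous_shift; assumption. }
  assert (RZ : RInt Z 0 (INR a * T) = 0).
  { unfold Z; destruct (Nat.eqb j 2).
    - now apply RInt_mul_derive_translate.
    - rewrite (RInt_const (V := R_CompleteNormedModule)); unfold scal; simpl; unfold mult; simpl; ring. }
  unfold Melnikov.
  transitivity (RInt (fun t => (cos (2 * tau0) * coef_cos J K t + sin (2 * tau0) * coef_sin J K t)
                               - Z t) 0 (INR a * T)).
  - apply RInt_ext; intros t _.
    change (v3 (xp (s + t)) (yp (s + t)) (zp (s + t))) with (snd (Xstar x y z xp yp zp (s + t))).
    rewrite (hj_dot_decomp j mu (Xstar x y z xp yp zp (s + t)) (tau0 + t)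
               (norm3_Rbig1_neq_0 mu _ _ _ (Hav1 (s + t)))
               (norm3_Rbigmu_neq_0 mu _ _ _ (Hav2 (s + t)))).
    unfold coef_cos, coef_sin, J, K, Z, along.
    replace (2 * (tau0 + t)) with (2 * tau0 + 2 * t) by ring.
    rewrite cos_plus, sin_plus; unfold Xstar, vz, v3; cbn [fst snd]; as_R_eq; ring.
  - assert (ex : forall F, (forall t, continuous F t) -> ex_RInt F 0 (INR a * T))
      by (intros; now apply ex_RInt_continuous_R).
    assert (Ccos := fun t => coef_cos_continuous J K t CJ CK).
    assert (Csin := fun t => coef_sin_continuous J K t CJ CK).
    rewrite (RInt_Rminus (fun t => cos (2 * tau0) * coef_cos J K t + sin (2 * tau0) * coef_sin J K t) Z),
      RInt_lincomb, RZ by (auto || apply ex; intros; solve_continuous).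
    ring.
Qed.

Theorem proposition3
  (mu : R) (j : nat) (T : R) (a b : nat)
  (x y z xp yp zp : R -> R) (s : R)
  (Hmu : 0 < mu < 1)
  (Hj : j = 2%nat \/ j = 3%nat)
  (HT : 0 < T)
  (Ha : (0 < a)%nat) (Hb : (0 < b)%nat) (Hab : Nat.gcd a b = 1%nat)
  (HaT : INR a * T = INR b * PI)
  (Hdx : forall t, is_derive x t (xp t))
  (Hdy : forall t, is_derive y t (yp t))
  (Hdz : forall t, is_derive z t (zp t))
  (Hcx : forall t, continuous xp t)
  (Hcy : forall t, continuous yp t)
  (Hcz : forall t, continuous zp t)
  (Hpx : forall t, x (t + T) = x t) (Hpy : forall t, y (t + T) = y t)
  (Hpz : forall t, z (t + T) = z t)
  (Hpxp : forall t, xp (t + T) = xp t) (Hpyp : forall t, yp (t + T) = yp t)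
  (Hpzp : forall t, zp (t + T) = zp t)
  (Hav1 : forall t, ~ (x t = - mu /\ y t = 0 /\ z t = 0))
  (Hav2 : forall t, ~ (x t = 1 - mu /\ y t = 0 /\ z t = 0))
  (Hsym : forall tau, 0 <= tau <= T / 2 ->
     x (s + T - tau) = x (s + tau) /\ xp (s + T - tau) = - xp (s + tau) /\
     y (s + T - tau) = - y (s + tau) /\ yp (s + T - tau) = yp (s + tau) /\
     z (s + T - tau) * zp (s + T - tau) = - (z (s + tau) * zp (s + tau))) :
  let M := Melnikov j mu x y z xp yp zp a T in
  let B := RInt (fun tau =>
              Kj j mu (Xstar x y z xp yp zp (s + tau)) * cos (2 * tau)
              - Jj j mu (Xstar x y z xp yp zp (s + tau)) * sin (2 * tau)) 0 (T / 2) in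
  (forall tau0 : R,
     M s tau0 = 2 * (if Nat.eqb a 1 then sin (2 * tau0) else 0) * B) /\
  ((1 < a)%nat -> forall s' tau0 : R, M s' tau0 = 0) /\
  (a = 1%nat -> forall k : Z, M s (IZR k * (PI / 2)) = 0).
Proof.
  intros M B.
  set (X := Xstar x y z xp yp zp).
  assert (HX : forall t, X (t + T) = X t)
    by (intros; unfold X, Xstar; now rewrite Hpx, Hpy, Hpz, Hpxp, Hpyp, Hpzp).
  set (J := fun s' => along (Jj j mu) X s'). set (K := fun s' => along (Kj j mu) X s').
  assert (CJK := fun s' t => along_Jj_Kj_continuous j mu x y z xp yp zp s' t
                   Hdx Hdy Hdz Hcx Hcy Hcz Hav1 Hav2).
  assert (Hdecomp : forall s' tau0, M s' tau0 =
    cos (2 * tau0) * RInt (coef_cos (J s') (K s')) 0 (INR a * T)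
    + sin (2 * tau0) * RInt (coef_sin (J s') (K s')) 0 (INR a * T)).
  { intros s' tau0; apply Melnikov_decomp; try assumption; now apply periodic_mult. }
  destruct (cos_sin_2_INR_PI b) as [c2L s2L]; rewrite <- HaT in c2L, s2L.
  assert (Hgt1 : (1 < a)%nat -> forall s' tau0, M s' tau0 = 0).
  { intros Ha1 s' tau0; rewrite Hdecomp.
    assert (sT := sin_neq_0_coprime a b T Ha1 Hab HaT).
    destruct (RInt_coef_vanish (J s') (K s') T a) as [-> ->];
      try (intros; apply CJK || apply along_periodic, HX); try assumption.
    ring. }
  assert (Heq1 : a = 1%nat -> forall tau0, M s tau0 = 2 * sin (2 * tau0) * B).
  { intros -> tau0; rewrite Hdecomp; simpl INR in *; rewrite Rmult_1_l in *.
    destruct (RInt_coef_reflect (J s) (K s) T) as [-> ->]; try assumption.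
    - intros; apply CJK.
    - intros; apply CJK.
    - now apply along_Jj_Kj_reflect.
    - change B with (RInt (coef_sin (J s) (K s)) 0 (T / 2)); ring. }
  split; [| split].
  - intros tau0; destruct (Nat.eqb_spec a 1) as [E | E].
    + rewrite (Heq1 E); ring.
    + rewrite (Hgt1 ltac:(lia)); ring.
  - exact Hgt1.
  - intros Ha1 k; rewrite (Heq1 Ha1).
    replace (2 * (IZR k * (PI / 2))) with (IZR k * PI) by field.
    rewrite sin_eq_0_1 by (exists k; reflexivity); ring.
Qed.
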